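(* If $G$ is a graph with no isolated vertices, then $\chi_{\mu_2}(G)\le \gamma_t(G)$.
   Context: A set $D\subseteq V(G)$ is a total dominating set if every vertex of $G$ has a neighbor in $D$; $\gamma_t(G)$ is the minimum cardinality of a total dominating set. A set $M\subseteq V(G)$ is a $2$-distance mutual-visibility set if for every two vertices $u,v\in M$ there exists a shortest $u,v$-path of length at most $2$ none of whose internal vertices lies in $M$. $\chi_{\mu_2}(G)$ is the minimum cardinality of a partition of $V(G)$ into $2$-distance mutual-visibility sets. *)

From mathcomp Require Import all_boot.
Set Implicit Arguments. Unset Strict Implicit. Unset Printing Implicit Defensive.

Definition simple_graph (T : finType) (e : rel T) : Prop :=
  symmetric e /\ irreflexive e.

Definition no_isolated (T : finType) (e : rel T) : Prop :=
  forall v : T, exists u : T, e v u.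

Definition total_dominating (T : finType) (e : rel T) (D : {set T}) : bool :=
  [forall v : T, [exists u in D, e v u]].

(* gamma_t(G): minimum cardinality of a total dominating set
   (default #|T| is attained by [set: T] when G has no isolated vertices). *)
Definition gamma_t (T : finType) (e : rel T) : nat :=
  \big[minn/#|T|]_(D : {set T} | total_dominating e D) #|D|.

(* M is a 2-distance mutual-visibility set: for all u, v in M there is a
   shortest u,v-path of length at most 2 with no internal vertex in M.
   For u = v the trivial path works; if u, v adjacent the edge works;
   otherwise the distance must be 2 and the path is u - w - v with w
   a common neighbour not in M. *)
Definition dmv2 (T : finType) (e : rel T) (M : {set T}) : bool :=
  [forall u in M, forall v in M,
     [|| u == v, e u v | [exists w, (w \notin M) && e u w && e w v]]].

(* chi_{mu_2}(G): minimum number of blocks of a partition of V(G) into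
   2-distance mutual-visibility sets (singletons always give a valid partition,
   so the default #|T| is attained). *)
Definition chi_mu2 (T : finType) (e : rel T) : nat :=
  \big[minn/#|T|]_(P : {set {set T}} |
      partition P [set: T] && [forall B in P, dmv2 e B]) #|P|.

From mathcomp Require Import all_boot order.
Import Order.TTheory.

Set Implicit Arguments.
Unset Strict Implicit.
Unset Printing Implicit Defensive.

(* Let D be a total dominating set and send every vertex v to a neighbour
   f v in D.  The fibres of f partition V(G) into at most |D| blocks, and each
   fibre f^-1(d) is a 2-distance mutual-visibility set: any two of its
   vertices have the common neighbour d, which does not lie in the fibre
   since f d is a neighbour of d and G has no loops. *)

Lemma card_preim_partition (aT rT : finType) (f : aT -> rT) (D : {set aT}) :
  #|preim_partition f D| <= #|f @: D|.
Proof.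
rewrite /preim_partition /equivalence_partition.
have -> : [set [set y in D | f x == f y] | x in D] =
          (fun d => [set y in D | d == f y]) @: (f @: D).
  by rewrite -imset_comp.
exact: leq_imset_card.
Qed.

Section MutualVisibility.

Variables (T : finType) (e : rel T).
Hypotheses (e_sym : symmetric e) (e_irr : irreflexive e).

Lemma dmv2_common_neighbour (M : {set T}) (w : T) :
  w \notin M -> {in M, forall v, e v w} -> dmv2 e M.
Proof.
move=> wM Mw; apply/forallP => u; apply/implyP => uM.
apply/forallP => v; apply/implyP => vM.
apply/orP; right; apply/orP; right; apply/existsP; exists w.
by rewrite wM Mw // e_sym Mw.
Qed.

Lemma chi_mu2_le_card (P : {set {set T}}) :
  partition P [set: T] -> {in P, forall B, dmv2 e B} -> chi_mu2 e <= #|P|.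
Proof.
move=> P_part P_dmv2; apply: (@bigmin_le_cond _ nat _ _ P _ (fun Q => #|Q|)).
by rewrite P_part; apply/forall_inP.
Qed.

Lemma chi_mu2_le_card_image (f : T -> T) :
  (forall v, e v (f v)) -> chi_mu2 e <= #|f @: [set: T]|.
Proof.
move=> f_adj; apply/leq_trans/card_preim_partition.
apply: chi_mu2_le_card; first exact: preim_partitionP.
move=> _ /imsetP[x _ ->].
apply: (@dmv2_common_neighbour _ (f x)) => [|v]; rewrite !inE /=.
  by apply: contraTN (f_adj (f x)) => /eqP <-; rewrite e_irr.
by move/eqP ->.
Qed.

Lemma chi_mu2_le_total_dominating (D : {set T}) :
  total_dominating e D -> chi_mu2 e <= #|D|.
Proof.
move=> /forallP D_tot.
have /fin_all_exists2[f fD f_adj] : forall v, exists2 u, u \in D & e v u.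
  by move=> v; have /exists_inP[u] := D_tot v; exists u.
apply: leq_trans (chi_mu2_le_card_image f_adj) _.
by apply: subset_leq_card; apply/subsetP => _ /imsetP[v _ ->].
Qed.

End MutualVisibility.

Lemma total_dominating_setT (T : finType) (e : rel T) :
  no_isolated e -> total_dominating e [set: T].
Proof.
by move=> noiso; apply/forallP => v; have [u evu] := noiso v; apply/exists_inP; exists u.
Qed.

Theorem theorem3p2 (T : finType) (e : rel T) :
  simple_graph e -> no_isolated e -> chi_mu2 e <= gamma_t e.
Proof.
move=> [e_sym e_irr] noiso.
have chi_le_tds := chi_mu2_le_total_dominating e_sym e_irr.
apply: (@le_bigmin _ nat) => [|D D_tot]; rewrite leEnat.
  by rewrite -cardsT; exact: chi_le_tds (total_dominating_setT noiso).
exact: chi_le_tds D_tot.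
Qed.
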